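(* Let $s,t,D\ge1$ be integers and let $\mathcal G=\{G_1,\dots,G_t\}$ be an $s$-joined graph family on $n$ vertices. Let $\mathcal H$ be a rooted $[t]$-edge-colored graph with $\Delta^{mon}(\mathcal H)\le D$ and $|V(\mathcal H)|\le n-2sD-3s$, and let $\mathcal H_0$ be a rooted subgraph obtained from $\mathcal H$ by successively removing non-root vertices of degree $1$ (roots unchanged). If $\phi_0:\mathcal H_0\hookrightarrow\mathcal G$ is a $(2s,D)$-good embedding, then there is a $(2s,D)$-good embedding $\phi:\mathcal H\hookrightarrow\mathcal G$ extending $\phi_0$.
   Context: A graph family $\mathcal G=\{G_1,\dots,G_t\}$ is a collection of $t$ simple graphs on a common finite vertex set $V$, $n=|V|$. For $X\subseteq V\times[t]$, $\Gamma_{\mathcal G}(X)=\bigcup_{(v,i)\in X}\{u\in V:uv\in E(G_i)\}$. The family is $s$-joined if for all $X\subseteq V\times[t]$ and $Y\subseteq V$ with $|X|\ge s$ and $|Y|\ge s$ there exist $(v,i)\in X$ and $y\in Y$ with $vy\in E(G_i)$. A $[t]$-edge-colored graph $\mathcal H$ is a simple graph with each edge colored in $[t]$; $H_i$ is its spanning subgraph of color-$i$ edges, $\deg_{H_i}(h)$ the number of color-$i$ edges at $h$, and $\Delta^{mon}(\mathcal H)=\max_i\max_h\deg_{H_i}(h)$. An embedding $\phi:\mathcal H\hookrightarrow\mathcal G$ is an injective map $V(\mathcal H)\to V$ with $\phi(x)\phi(y)\in E(G_i)$ for every edge $xy$ of color $i$. A rooted $[t]$-edge-colored graph is one with a distinguished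 set of roots such that, after deleting all edges with both ends roots, every connected component is a tree containing exactly one root; for a non-root $h$ the unique path from $h$ to the root set (meeting it only at its last vertex) determines the parent of $h$ (its neighbour on the path) and $c(h)$, the color of the edge from $h$ to its parent. For fixed $D$: $P_\phi(\mathcal H)=\{(\phi(h),c(h)):h\text{ non-root}\}$ and, for $X\subseteq V\times[t]$, $R(X,\phi)=|\Gamma_{\mathcal G}(X)\setminus\phi(V(\mathcal H))|-\sum_{(v,i)\in X}[D-\deg_{H_i}(\phi^{-1}(v))]-|P_\phi(\mathcal H)\cap X|$, with $\deg_{H_i}(\phi^{-1}(v))=0$ if $v\notin\phi(V(\mathcal H))$. The embedding $\phi$ is $(s,D)$-good if $R(X,\phi)\ge0$ for every $X\subseteq V\times[t]$ with $|X|\le s$. An embedding of $\mathcal H$ extends $\phi_0$ if it agrees with $\phi_0$ on $V(\mathcal H_0)$. *)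

From mathcomp Require Import all_boot all_order all_algebra.
From mathcomp Require Import boolp.
Set Implicit Arguments. Unset Strict Implicit. Unset Printing Implicit Defensive.
Import GRing.Theory Num.Theory.

Section Defs.
Variables (t : nat) (V W : finType).

(** Graph family: G i is the edge relation of G_(i+1) on the common vertex set V. *)
Definition simple_family (G : 'I_t -> rel V) : Prop :=
  forall i, symmetric (G i) /\ irreflexive (G i).

Definition Gamma (G : 'I_t -> rel V) (X : {set V * 'I_t}) : {set V} :=
  [set u | [exists x in X, G x.2 x.1 u]].

Definition s_joined (s : nat) (G : 'I_t -> rel V) : Prop :=
  forall (X : {set V * 'I_t}) (Y : {set V}), s <= #|X| -> s <= #|Y| ->
    exists2 x, x \in X & exists2 y, y \in Y & G x.2 x.1 y.

(** A [t]-edge-colored simple graph on W: col x y = Some i iff xy is an edge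
    of colour i; None iff no edge. *)
Definition colored_simple (col : W -> W -> option 'I_t) : Prop :=
  (forall x y, col x y = col y x) /\ (forall x, col x x = None).

(** Everything below is relative to a vertex subset S of W: the colored graph
    considered is the one induced on S (S = setT for H itself). *)
Variable col : W -> W -> option 'I_t.

Definition degc (S : {set W}) (i : 'I_t) (h : W) : nat :=
  #|[set y in S | col h y == Some i]|.

Definition deg (S : {set W}) (h : W) : nat :=
  #|[set y in S | col h y != None]|.

Definition redge (S R : {set W}) : rel W :=
  fun x y => [&& x \in S, y \in S, col x y != None & ~~ ((x \in R) && (y \in R))].

Definition rooted (S R : {set W}) : Prop :=
  [/\ R \subset S,
      (forall c : seq W, uniq c -> 3 <= size c -> ~~ cycle (redge S R) c)
    & (forall x, x \in S -> exists! r, r \in R /\ connect (redge S R) x r)].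

Definition root_path (S R : {set W}) (h : W) (p : seq W) : bool :=
  [&& path (redge S R) h p, uniq (h :: p), last h p \in R
    & all (fun x => x \notin R) (belast h p)].

Inductive pruned (R : {set W}) : {set W} -> Prop :=
  | pruned_all : pruned R setT
  | pruned_step S v : pruned R S -> v \in S -> v \notin R -> deg S v = 1 ->
      pruned R (S :\ v).

Definition embedding (G : 'I_t -> rel V) (S : {set W}) (phi : W -> V) : Prop :=
  {in S &, injective phi} /\
  (forall x y i, x \in S -> y \in S -> col x y = Some i -> G i (phi x) (phi y)).

Definition deginv (S : {set W}) (phi : W -> V) (i : 'I_t) (v : V) : nat :=
  match [pick h in S | phi h == v] with Some h => degc S i h | None => 0 end.

(** P_phi(H) = {(phi(h), c(h)) : h non-root} *)
Definition Pset (S R : {set W}) (phi : W -> V) : {set V * 'I_t} :=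
  [set x : V * 'I_t | `[< exists h p0 p, [/\ h \in S, h \notin R,
        root_path S R h (p0 :: p), col h p0 = Some x.2 & phi h = x.1] >]].

Definition Rval (G : 'I_t -> rel V) (D : nat) (S R : {set W}) (phi : W -> V)
  (X : {set V * 'I_t}) : int :=
  (#|Gamma G X :\: phi @: S|%:Z
   - \sum_(x in X) (D%:Z - (deginv S phi x.2 x.1)%:Z)
   - #|Pset S R phi :&: X|%:Z)%R.

Definition good (G : 'I_t -> rel V) (s D : nat) (S R : {set W}) (phi : W -> V) : Prop :=
  forall X : {set V * 'I_t}, #|X| <= s -> (0 <= Rval G D S R phi X)%R.

End Defs.

From mathcomp Require Import all_boot all_order all_algebra.
From mathcomp Require Import boolp zify.
Set Implicit Arguments. Unset Strict Implicit. Unset Printing Implicit Defensive.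
Import Order.TTheory GRing.Theory Num.Theory.

(* The embedding is extended one leaf at a time, undoing the pruning.  Write
   R(X) = |Gamma(X) \ phi(S)| - sum_(x in X) weight x.  Then R is submodular,
   goodness says R >= 0 on sets of size <= 2s, and s-joinedness together with
   the bound on |V| makes R > 0 on sets of size between s and 2s.  Hence the
   tight sets (R = 0) of size <= 2s avoiding a given pair are smaller than s and
   closed under union, so they all lie in a largest one X0.  To place a leaf h
   hanging from p by an edge of colour i, let u = phi p: the pair (u, i) has
   positive weight because p still has spare colour-i degree, so goodness of
   X0 + (u, i) produces a colour-i neighbour w of u outside phi(S) and outside
   Gamma(X0).  Sending h to w lowers R(X) by at most [w in Gamma X] - [(u, i) in X],
   which could only break goodness for a tight X avoiding (u, i); but such an X
   lies in X0, so w is not in Gamma X. *)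

Lemma cardsID_sum (T : finType) (A B : {set T}) :
  #|A :&: B| = \sum_(x in B) (x \in A).
Proof.
rewrite -sum1_card (eq_bigl (fun x => (x \in B) && (x \in A))) ?big_mkcondr //.
by move=> x; rewrite !inE andbC.
Qed.

Lemma sumr_setUI (T : finType) (F : T -> int) (X Y : {set T}) :
  (\sum_(x in X :|: Y) F x + \sum_(x in X :&: Y) F x =
   \sum_(x in X) F x + \sum_(x in Y) F x)%R.
Proof.
rewrite (big_setID X (A := X :|: Y)) [in RHS](big_setID X (A := Y)) /=.
by rewrite setUK setDUl setDv set0U (setIC X Y) -addrA [X in (_ + X)%R]addrC.
Qed.

Section Neighbourhood.
Variables (t : nat) (V : finType) (G : 'I_t -> rel V).
Implicit Types (X Y : {set V * 'I_t}) (A : {set V}).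

Lemma GammaU X Y : Gamma G (X :|: Y) = Gamma G X :|: Gamma G Y.
Proof.
apply/setP=> u; rewrite !inE; apply/existsP/orP => [[x]|[]/existsP[x /andP[xX Gx]]].
- by rewrite inE => /andP[/orP[] xX Gx]; [left|right];
    apply/existsP; exists x; rewrite xX.
- by exists x; rewrite inE xX.
- by exists x; rewrite inE xX orbT.
Qed.

Lemma GammaS X Y : X \subset Y -> Gamma G X \subset Gamma G Y.
Proof.
move=> sXY; apply/subsetP=> u; rewrite !inE => /existsP[x /andP[xX Gx]].
by apply/existsP; exists x; rewrite (subsetP sXY).
Qed.

Lemma Gamma0 : Gamma G set0 = set0.
Proof. by apply/setP=> u; rewrite !inE; apply/existsP => -[x]; rewrite inE. Qed.

Lemma mem_Gamma1 x u : (u \in Gamma G [set x]) = G x.2 x.1 u.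
Proof.
rewrite inE; apply/existsP/idP => [[y]|Gu]; last by exists x; rewrite inE eqxx.
by rewrite inE => /andP[/eqP ->].
Qed.

Lemma card_GammaD_submod A X Y :
  #|Gamma G (X :|: Y) :\: A| + #|Gamma G (X :&: Y) :\: A| <=
  #|Gamma G X :\: A| + #|Gamma G Y :\: A|.
Proof.
rewrite -(cardsUI (Gamma G X :\: A)) GammaU setDUl leq_add2l subset_leq_card //.
by rewrite -setDIl setSD // subsetI !GammaS ?subsetIl ?subsetIr.
Qed.

End Neighbourhood.

Section Rval.
Variables (t : nat) (V W : finType) (G : 'I_t -> rel V) (col : W -> W -> option 'I_t).
Variables (D : nat) (S R : {set W}) (phi : W -> V).
Implicit Types (X Y : {set V * 'I_t}).

Local Notation Rv := (Rval col G D S R phi).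

Definition weight (x : V * 'I_t) : int :=
  (D%:Z - (deginv col S phi x.2 x.1)%:Z + (x \in Pset col S R phi : nat)%:Z)%R.

Lemma RvalE X : Rv X = (#|Gamma G X :\: phi @: S|%:Z - \sum_(x in X) weight x)%R.
Proof.
rewrite /Rval /weight [in RHS]big_split /= cardsID_sum.
by rewrite (big_morph Posz PoszD (erefl 0%R)) opprD addrA.
Qed.

Lemma Rval0 : Rv set0 = 0%R.
Proof. by rewrite RvalE Gamma0 set0D cards0 big_set0. Qed.

Lemma Rval_submod X Y : (Rv (X :|: Y) + Rv (X :&: Y) <= Rv X + Rv Y)%R.
Proof.
rewrite !RvalE addrACA [leRHS]addrACA -!opprD sumr_setUI lerD2r -!PoszD lez_nat.
exact: card_GammaD_submod.
Qed.

Lemma weight_le x : (weight x <= (D + 1)%:Z)%R.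
Proof. by rewrite /weight; case: (x \in Pset col S R phi) => /=; lia. Qed.

Lemma Rval_gt0 s X :
  s_joined s G -> #|W| + 2 * s * D + 3 * s <= #|V| -> s <= #|X| <= 2 * s ->
  (0 < Rv X)%R.
Proof.
move=> joined hV /andP[sX Xs]; rewrite RvalE.
have weightX : (\sum_(x in X) weight x <= ((D + 1) * #|X|)%N%:Z)%R.
  apply: le_trans (ler_sum _ (fun x _ => weight_le x)) _.
  by rewrite sumr_const -mulr_natr natz -PoszM mulnC.
have coGamma : #|~: Gamma G X| < s.
  rewrite ltnNge; apply/negP => sC.
  have [x xX [y]] := joined X _ sX sC.
  by rewrite !inE => /existsPn/(_ x); rewrite xX /= => /negbTE ->.
have imS : #|Gamma G X :&: phi @: S| <= #|W|.
  rewrite (leq_trans (subset_leq_card (subsetIr _ _))) //.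
  by rewrite (leq_trans (leq_imset_card _ _)) ?max_card.
have := cardsC (Gamma G X); have := cardsD (Gamma G X) (phi @: S).
have : (D + 1) * #|X| <= (D + 1) * (2 * s) by rewrite leq_mul2l Xs orbT.
lia.
Qed.

End Rval.

Section TightSets.
Variables (t s D : nat) (V W : finType) (G : 'I_t -> rel V) (col : W -> W -> option 'I_t).
Variables (S R : {set W}) (phi : W -> V).
Hypothesis phi_good : good col G (2 * s) D S R phi.
Implicit Types (X Y : {set V * 'I_t}).

Local Notation Rv := (Rval col G D S R phi).

Lemma tight_extension_neighbour X0 x0 :
  #|X0| < 2 * s -> Rv X0 = 0%R -> x0 \notin X0 -> (0 < weight col D S R phi x0)%R ->
  exists2 w, G x0.2 x0.1 w & (w \notin phi @: S) && (w \notin Gamma G X0).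
Proof.
move=> X0s RX0 x0X0 wx0.
have gain (c1 c0 : nat) (a b : int) :
  (c0%:Z - b = 0)%R -> (0 < a)%R -> (0 <= c1%:Z - (a + b))%R -> c0 < c1 by lia.
have /phi_good : #|x0 |: X0| <= 2 * s by rewrite cardsU1 x0X0.
rewrite RvalE in RX0; rewrite RvalE big_setU1 //= => /(gain _ _ _ _ RX0 wx0) Gamma_grows.
have : ~~ (Gamma G (x0 |: X0) :\: phi @: S \subset Gamma G X0 :\: phi @: S).
  by apply: contraTN Gamma_grows => /subset_leq_card; rewrite -leqNgt.
case/subsetPn => w; rewrite !in_setD GammaU in_setU mem_Gamma1.
case/andP=> wS /orP[Gw|->]; rewrite wS //= => wX0.
by exists w; rewrite // wS.
Qed.

Hypotheses (joined : s_joined s G) (hV : #|W| + 2 * s * D + 3 * s <= #|V|).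

Lemma tight_small X : #|X| <= 2 * s -> Rv X = 0%R -> #|X| < s.
Proof.
move=> Xs RX; rewrite ltnNge; apply/negP => sX.
by have := Rval_gt0 col S R phi (X := X) joined hV; rewrite sX Xs RX ltxx => /(_ isT).
Qed.

Lemma tight_setU X Y :
  #|X| <= 2 * s -> #|Y| <= 2 * s -> Rv X = 0%R -> Rv Y = 0%R -> Rv (X :|: Y) = 0%R.
Proof.
move=> Xs Ys RX RY; have XYs : #|X :|: Y| <= 2 * s.
  rewrite (leq_trans (leq_card_setU _ _)) // mul2n -addnn.
  by rewrite leq_add // ltnW // tight_small.
have XYs' : #|X :&: Y| <= 2 * s by rewrite (leq_trans (subset_leq_card (subsetIl _ _))).
have := Rval_submod G col D S R phi X Y; have := phi_good XYs; have := phi_good XYs'.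
rewrite RX RY; lia.
Qed.

Lemma max_tight_avoiding x0 :
  exists X0, [/\ Rv X0 = 0%R, #|X0| < s, x0 \notin X0 &
    forall Y, #|Y| <= 2 * s -> Rv Y = 0%R -> x0 \notin Y -> Y \subset X0].
Proof.
pose tight X := [&& Rv X == 0%R, #|X| <= 2 * s & x0 \notin X].
have tight0 : tight set0 by rewrite /tight Rval0 eqxx cards0 in_set0.
have [X0 /and3P[/eqP RX0 X0s x0X0] maxX0] := arg_maxnP (fun X => #|X|) tight0.
exists X0; split=> [//||//|Y Ys RY x0Y]; first exact: tight_small.
have tightU : tight (X0 :|: Y).
  rewrite /tight tight_setU // eqxx in_setU negb_or x0X0 x0Y andbT.
  rewrite (leq_trans (leq_card_setU _ _)) // mul2n -addnn.
  by rewrite leq_add // ltnW // tight_small.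
have /eqP-> : X0 == X0 :|: Y by rewrite eqEcard subsetUl; exact: maxX0.
exact: subsetUr.
Qed.

End TightSets.

Lemma deginv_f t (V W : finType) (col : W -> W -> option 'I_t) (S : {set W})
    (phi : W -> V) (i : 'I_t) h :
  {in S &, injective phi} -> h \in S -> deginv col S phi i (phi h) = degc col S i h.
Proof.
move=> phi_inj hS; rewrite /deginv; case: pickP => [h' /andP[h'S /eqP e]|none].
  by rewrite (phi_inj _ _ h'S hS e).
by have := none h; rewrite hS eqxx.
Qed.

Lemma deginv_out t (V W : finType) (col : W -> W -> option 'I_t) (S : {set W})
    (phi : W -> V) (i : 'I_t) v :
  v \notin phi @: S -> deginv col S phi i v = 0.
Proof.
move=> vS; rewrite /deginv; case: pickP => [h /andP[hS /eqP e]|//].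
by move: vS; rewrite -e imset_f.
Qed.

Lemma degcU1 t (W : finType) (col : W -> W -> option 'I_t) (S : {set W}) h (j : 'I_t) q :
  h \notin S -> degc col (h |: S) j q = degc col S j q + (col q h == Some j).
Proof.
move=> hS; rewrite /degc; set Y := [set y in S | _].
case: (boolP (col q h == Some j)) => colqh.
  have -> : [set y in h |: S | col q y == Some j] = h |: Y.
    by apply/setP=> y; rewrite !inE; case: eqP => [->|].
  by rewrite cardsU1 inE (negbTE hS) addnC.
have -> : [set y in h |: S | col q y == Some j] = Y.
  apply/setP=> y; rewrite !inE; case: eqP => [->|] //=.
  by rewrite (negbTE hS) (negbTE colqh).
by rewrite addn0.
Qed.

Lemma cardsD_setU1 (T : finType) (A B : {set T}) w :
  w \notin A -> #|B :\: A| = (w \in B) + #|B :\: (w |: A)|.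
Proof. by move=> wA; rewrite (cardsD1 w) in_setD wA setDDl setUC. Qed.

Section LeafExtension.
Variables (t : nat) (V W : finType) (G : 'I_t -> rel V) (col : W -> W -> option 'I_t).
Variables (D : nat) (S0 R : {set W}) (h p : W) (i : 'I_t) (phi : W -> V) (w : V).
Hypotheses (col_simple : colored_simple col) (hS0 : h \in S0) (hR : h \notin R).
Hypotheses (pS0 : p \in S0) (colhp : col h p = Some i)
  (leaf : forall y, y \in S0 -> col h y != None -> y = p).
Implicit Types (X : {set V * 'I_t}).

Local Notation S := (S0 :\ h).
Local Notation phi' := [eta phi with h |-> w].

Lemma parent_neq_leaf : p != h.
Proof. by apply/eqP => ph; move: colhp; rewrite ph col_simple.2. Qed.

Lemma parent_in_pruned : p \in S.
Proof. by rewrite in_setD1 parent_neq_leaf pS0. Qed.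

Lemma col_to_leaf y j : y \in S0 -> (col y h == Some j) = (y == p) && (j == i).
Proof.
move=> yS0; rewrite col_simple.1; case: (eqVneq y p) => [->|yp].
  by rewrite colhp (inj_eq Some_inj) eq_sym.
by case: (col h y) (leaf yS0) => // c /(_ isT) /eqP; rewrite (negbTE yp).
Qed.

Lemma degc_leaf j : degc col S0 j h = (j == i).
Proof.
rewrite /degc; case: (eqVneq j i) => [->|ji].
  apply/eqP/cards1P; exists p; apply/setP=> y; rewrite !inE.
  rewrite -col_simple.1; case: (boolP (y \in S0)) => yS0.
    by rewrite col_to_leaf // eqxx andbT.
  by apply/esym/negbTE; apply: contraNneq yS0 => ->.
apply/eqP; rewrite cards_eq0; apply/eqP/setP => y; rewrite !inE -col_simple.1.
by case: (boolP (y \in S0)) => //= yS0; rewrite col_to_leaf // (negbTE ji) andbF.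
Qed.

Lemma degc_parent q j :
  q \in S -> degc col S0 j q = degc col S j q + ((q == p) && (j == i)).
Proof.
move=> qS; rewrite -{1}(setD1K hS0) degcU1 ?setD11 // col_to_leaf //.
by move: qS; rewrite in_setD1 => /andP[].
Qed.

Hypotheses (phi_inj : {in S &, injective phi}) (wS : w \notin phi @: S).

Lemma extend_at : phi' h = w.
Proof. by rewrite /= eqxx. Qed.

Lemma extend_out x : x != h -> phi' x = phi x.
Proof. by move=> /negbTE /= ->. Qed.

Lemma imset_extend : phi' @: S0 = w |: phi @: S.
Proof.
rewrite -{1}(setD1K hS0) imsetU1 extend_at; congr (_ |: _).
by apply: eq_in_imset => x; rewrite in_setD1 => /andP[/extend_out].
Qed.

Lemma extend_inj : {in S0 &, injective phi'}.
Proof.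
have phi_neq x : x \in S -> phi x != w.
  by move=> xS; apply: contraNneq wS => <-; apply: imset_f.
move=> x y xS0 yS0; case: (eqVneq x h) => [->|xh]; case: (eqVneq y h) => [->|yh] //.
- rewrite extend_at extend_out // => /esym/eqP; rewrite (negbTE (phi_neq y _)) //.
  by rewrite in_setD1 yh.
- rewrite extend_at extend_out // => /eqP; rewrite (negbTE (phi_neq x _)) //.
  by rewrite in_setD1 xh.
- by rewrite !extend_out //; apply: phi_inj; rewrite in_setD1 ?xh ?yh.
Qed.

Lemma deginv_extend j y :
  deginv col S0 phi' j y =
  deginv col S phi j y + ((y, j) == (phi p, i)) + ((y, j) == (w, i)).
Proof.
have pS := parent_in_pruned.
have phi_neq q : q \in S -> (phi q == w) = false.
  by move=> qS; apply: negbTE; apply: contraNneq wS => <-; apply: imset_f.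
case: (boolP (y \in phi @: S)) => [/imsetP[q qS ->]|yS].
  move: (qS); rewrite in_setD1 => /andP[qh qS0].
  rewrite -{1}(extend_out qh) (deginv_f _ _ extend_inj) // (deginv_f _ _ phi_inj) //.
  by rewrite degc_parent // !xpair_eqE (inj_in_eq phi_inj) // phi_neq // addn0.
have /negbTE yp : y != phi p by apply: contraNneq yS => ->; apply: imset_f.
rewrite !xpair_eqE yp [deginv col S phi j y]deginv_out //; case: (eqVneq y w) => [->|yw] /=.
  by have := deginv_f col j extend_inj hS0; rewrite extend_at degc_leaf => ->.
by rewrite deginv_out // imset_extend in_setU1 negb_or yw.
Qed.

Lemma embedding_extend :
  simple_family G -> embedding col G S phi -> G i (phi p) w -> embedding col G S0 phi'.
Proof.
move=> G_simple [_ phi_edge] Gpw; split=> [|x y j xS0 yS0]; first exact: extend_inj.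
have edge_to_leaf z : z \in S0 -> col z h = Some j -> G j (phi' z) w.
  move=> zS0 /eqP; rewrite col_to_leaf // => /andP[/eqP-> /eqP->].
  by rewrite extend_out // parent_neq_leaf.
case: (eqVneq x h) => [->|xh].
  by rewrite col_simple.1 extend_at (G_simple j).1 => /(edge_to_leaf _ yS0).
case: (eqVneq y h) => [->|yh]; first by rewrite extend_at => /(edge_to_leaf _ xS0).
by rewrite !extend_out //; apply: phi_edge; rewrite in_setD1 ?xh ?yh.
Qed.

(* On a root path, an interior visit of h would be entered and left through its
   only neighbour p, and a final visit is excluded because h is not a root. *)
Lemma root_path_avoids_leaf h0 q : h0 != h -> root_path col S0 R h0 q -> h \notin q.
Proof.
move=> h0h /and4P[pth un lst _]; apply/negP => hq.
move: pth un lst; case/splitPr: hq => s1 s2.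
case: s2 => [|z s2]; first by rewrite last_cat /= => _ _; apply/negP.
rewrite cat_path /= => /and4P[_ /and4P[lS _ c1 _] /and4P[_ zS c2 _] _].
move=> /andP[h0n]; rewrite cat_uniq => /and3P[_ hs _] _.
have e1 : last h0 s1 = p by apply: (leaf lS); rewrite col_simple.1.
have e2 : z = p by exact: (leaf zS c2).
have := mem_last h0 s1; rewrite in_cons e1 -e2 => /orP[/eqP ez|zs1].
  by move: h0n; rewrite -ez mem_cat !inE eqxx !orbT.
by move: hs; rewrite /= zs1 orbT.
Qed.

Lemma Pset_extend : Pset col S0 R phi' \subset (w, i) |: Pset col S R phi.
Proof.
apply/subsetP => -[a j]; rewrite !inE => /asboolP[h0 [p0 [q [h0S0 h0R rp ch0 e]]]].
case: (eqVneq h0 h) => [eh|h0h].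
  move: rp ch0 e; rewrite eh => /and4P[/= /andP[/and4P[_ p0S0 cp0 _] _] _ _ _].
  by rewrite (leaf p0S0 cp0) colhp eqxx => -[<-] <-; rewrite eqxx.
apply/orP; right; apply/asboolP; exists h0, p0, q; split => //.
- by rewrite in_setD1 h0h.
- have hq := root_path_avoids_leaf h0h rp.
  move: rp => /and4P[pth un lst al]; rewrite /root_path un lst al !andbT.
  apply: (sub_in_path (P := predC1 h)) pth.
    move=> x y; rewrite !inE => xh yh /and4P[xS yS cxy rr].
    by rewrite /redge !in_setD1 xh yh xS yS cxy rr.
  apply/allP => x; rewrite inE => /orP[/eqP ->|xq] /=; first exact: h0h.
  by apply: contraNneq hq => <-.
- by rewrite -(extend_out h0h).
Qed.

Lemma weight_extend x :
  (weight col D S0 R phi' x + (x == (phi p, i) : nat)%:Z <= weight col D S R phi x)%R.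
Proof.
have P_le : (x \in Pset col S0 R phi') <= (x == (w, i)) + (x \in Pset col S R phi).
  case: (boolP (x \in Pset col S0 R phi')) => // /(subsetP Pset_extend).
  by rewrite in_setU1 => /orP[] ->; rewrite ?leq_addr ?leq_addl.
case: x P_le => y j P_le; rewrite /weight deginv_extend /=.
move: P_le; case: (_ \in Pset _ _ _ _); case: (_ \in Pset _ _ _ _);
  case: (_ == (phi p, i)); case: (_ == (w, i)) => //= _; lia.
Qed.

Lemma sum_weight_extend X :
  (\sum_(x in X) weight col D S0 R phi' x + ((phi p, i) \in X : nat)%:Z <=
   \sum_(x in X) weight col D S R phi x)%R.
Proof.
have weight_le x : (weight col D S0 R phi' x <= weight col D S R phi x)%R.
  by have := weight_extend x; case: (_ == _) => /=; lia.
case: (boolP ((phi p, i) \in X)) => pX /=; last by rewrite addr0 ler_sum.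
rewrite !(big_setD1 _ pX) /= addrAC lerD //; last exact: ler_sum.
by have := weight_extend (phi p, i); rewrite eqxx.
Qed.

Lemma Rval_extend X :
  (Rval col G D S R phi X - (w \in Gamma G X : nat)%:Z + ((phi p, i) \in X : nat)%:Z <=
   Rval col G D S0 R phi' X)%R.
Proof.
rewrite !RvalE imset_extend (cardsD_setU1 (Gamma G X) wS).
have shift (b a c : nat) (sw sw' : int) :
  (sw' + a%:Z <= sw -> (b + c)%N%:Z - sw - b%:Z + a%:Z <= c%:Z - sw')%R by lia.
exact/shift/sum_weight_extend.
Qed.

Lemma good_extend s :
  good col G (2 * s) D S R phi ->
  (forall X, #|X| <= 2 * s -> Rval col G D S R phi X = 0%R -> (phi p, i) \notin X ->
     w \notin Gamma G X) ->
  good col G (2 * s) D S0 R phi'.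
Proof.
move=> phi_good tight_avoids X Xs; have := Rval_extend X; have := phi_good X Xs.
case: (boolP ((phi p, i) \in X)) => pX; case: (boolP (w \in Gamma G X)) => wX /=; try lia.
have : Rval col G D S R phi X != 0%R.
  by apply/eqP => RX; have := tight_avoids X Xs RX pX; rewrite wX.
lia.
Qed.

End LeafExtension.

Lemma deg_eq1_neighbour t (W : finType) (col : W -> W -> option 'I_t) (S : {set W}) h :
  deg col S h = 1 ->
  exists p i, [/\ p \in S, col h p = Some i & forall y, y \in S -> col h y != None -> y = p].
Proof.
move=> /eqP/cards1P[p Ep].
have : p \in [set y in S | col h y != None] by rewrite Ep set11.
rewrite inE => /andP[pS]; case colhp : (col h p) => [i|] // _.
by exists p, i; split=> // y yS cy; apply/set1P; rewrite -Ep inE yS cy.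
Qed.

Lemma good_extend_leaf t s D (V W : finType) (G : 'I_t -> rel V)
    (col : W -> W -> option 'I_t) (S0 R : {set W}) h (phi : W -> V) :
  simple_family G -> s_joined s G -> colored_simple col ->
  (forall i q, degc col S0 i q <= D) -> #|W| + 2 * s * D + 3 * s <= #|V| ->
  h \in S0 -> h \notin R -> deg col S0 h = 1 ->
  embedding col G (S0 :\ h) phi -> good col G (2 * s) D (S0 :\ h) R phi ->
  exists phi' : W -> V, [/\ embedding col G S0 phi',
     (forall x, x \in S0 :\ h -> phi' x = phi x) & good col G (2 * s) D S0 R phi'].
Proof.
move=> G_simple joined col_simple degD hV hS0 hR /deg_eq1_neighbour[p [i [pS0 colhp leaf]]].
move=> phi_emb phi_good; have pS := parent_in_pruned col_simple pS0 colhp.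
have [X0 [RX0 X0s pX0 X0max]] := max_tight_avoiding phi_good joined hV (phi p, i).
have spare_degree : (0 < weight col D (S0 :\ h) R phi (phi p, i))%R.
  have := degD i p; rewrite (degc_parent col_simple hS0 colhp leaf i pS) !eqxx.
  rewrite /weight (deginv_f col i phi_emb.1 pS); case: (_ \in _) => /=; lia.
have X0s' : #|X0| < 2 * s by rewrite (leq_trans X0s) // leq_pmull.
have [w Gw /andP[wS wX0]] := tight_extension_neighbour phi_good X0s' RX0 pX0 spare_degree.
exists [eta phi with h |-> w]; split.
- exact: (embedding_extend col_simple colhp leaf phi_emb.1 wS G_simple phi_emb Gw).
- by move=> x; rewrite in_setD1 => /andP[/extend_out ->].
- apply: (good_extend col_simple hS0 hR pS0 colhp leaf phi_emb.1 wS phi_good).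
  move=> X Xs RX pX; apply: contraNN wX0; apply/subsetP/GammaS.
  exact: X0max.
Qed.

Theorem lemma2p9 (s t D : nat) (V : finType) (G : 'I_t -> rel V)
  (W : finType) (col : W -> W -> option 'I_t) (R S : {set W}) (phi0 : W -> V) :
  1 <= s -> 1 <= t -> 1 <= D ->
  simple_family G -> s_joined s G ->
  colored_simple col -> rooted col setT R ->
  (forall (i : 'I_t) (h : W), degc col setT i h <= D) ->
  #|W| + 2 * s * D + 3 * s <= #|V| ->
  pruned col R S ->
  embedding col G S phi0 ->
  good col G (2 * s) D S R phi0 ->
  exists phi : W -> V,
    [/\ embedding col G setT phi,
        (forall x, x \in S -> phi x = phi0 x)
      & good col G (2 * s) D setT R phi].
Proof.
move=> _ _ _ G_simple joined col_simple _ degD hV pruned_S.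
elim: pruned_S phi0 => [|S' v _ IH vS' vR degv] phi0 phi0_emb phi0_good.
  by exists phi0.
have degD' i q : degc col S' i q <= D.
  rewrite (leq_trans _ (degD i q)) // subset_leq_card //.
  by apply/subsetP => y; rewrite !inE => /andP[].
have [phi1 [phi1_emb phi1_phi0 phi1_good]] :=
  good_extend_leaf G_simple joined col_simple degD' hV vS' vR degv phi0_emb phi0_good.
have [phi [phi_emb phi_phi1 phi_good]] := IH phi1 phi1_emb phi1_good.
exists phi; split=> // x xS; rewrite phi_phi1 ?phi1_phi0 //.
by move: xS; rewrite in_setD1 => /andP[].
Qed.
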